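(* Let $\Theta\subset\mathbb{R}^m$ be a nonempty polyhedral convex set, $g:\mathbb{R}^n\to\mathbb{R}^m$ be $\mathcal C^2$-smooth, $\Gamma:=\{x:g(x)\in\Theta\}$, and suppose MSCQ holds at $\bar x\in\Gamma$. Let $\bar v\in N_\Gamma(\bar x)$, and define $P(\bar x,\bar v):=\{y\in\mathbb{R}^m:\bar v=\nabla g(\bar x)^*y,\ y\in N_\Theta(g(\bar x))\}$ and, for $v\in K_\Gamma(\bar x,\bar v)$, $S(v):=\operatorname{argmax}\{\langle v,\nabla^2\langle y,g\rangle(\bar x)v\rangle: y\in P(\bar x,\bar v)\}$. Then $S(v)\neq\emptyset$ for every $v\in K_\Gamma(\bar x,\bar v)$.
   Context: MSCQ at $\bar x\in\Gamma$: there are a neighborhood $U$ of $\bar x$ and $\kappa>0$ with $\operatorname{dist}(x;\Gamma)\le\kappa\operatorname{dist}(g(x);\Theta)$ for all $x\in U$. $N_\Gamma$ is the limiting (Mordukhovich) normal cone; $N_\Theta$ the convex normal cone. Tangent cone $T_\Omega(\bar x):=\{w:\exists t_k\downarrow0,w_k\to w,\bar x+t_kw_k\in\Omega\}$; critical cone $K_\Omega(\bar x,\bar v):=T_\Omega(\bar x)\cap\{\bar v\}^\perp$. $\nabla^2\langle y,g\rangle(\bar x)$ is the Hessian of $x\mapsto\langle y,g(x)\rangle$ at $\bar x$. *)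

From HB Require Import structures.
From mathcomp Require Import all_boot all_order all_algebra.
From mathcomp Require Import all_classical all_reals all_analysis.
Set Implicit Arguments. Unset Strict Implicit. Unset Printing Implicit Defensive.
Import Order.TTheory GRing.Theory Num.Theory.
Import numFieldNormedType.Exports.
Local Open Scope classical_set_scope.
Local Open Scope ring_scope.

Section Defs.
Variable R : realType.

Definition dotv n (u v : 'rV[R]_n) : R := \sum_(i < n) u 0 i * v 0 i.
Definition enorm n (u : 'rV[R]_n) : R := Num.sqrt (dotv u u).

Definition ebasis n (i : 'I_n) : 'rV[R]_n := delta_mx 0 i.

Definition setdist n (x : 'rV[R]_n) (A : set 'rV[R]_n) : R :=
  inf [set enorm (x - a) | a in A].

Definition polyhedral m (Theta : set 'rV[R]_m) : Prop :=
  exists (k : nat) (A : 'M[R]_(k, m)) (b : 'rV[R]_k),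
    Theta = [set z | forall i : 'I_k, (z *m A^T) 0 i <= b 0 i].

Definition C2 n m (g : 'rV[R]_n -> 'rV[R]_m) : Prop :=
  (forall x, differentiable g x) /\
  (forall (j : 'I_n) x, differentiable (fun z => derive g z (ebasis j)) x) /\
  (forall (j k : 'I_n),
     continuous (fun x => derive (fun z => derive g z (ebasis j)) x (ebasis k))).

Definition MSCQ n m (g : 'rV[R]_n -> 'rV[R]_m) (Theta : set 'rV[R]_m)
  (xbar : 'rV[R]_n) : Prop :=
  exists kappa : R, 0 < kappa /\
    exists U, nbhs xbar U /\
      forall x, U x ->
        setdist x [set x' | Theta (g x')] <= kappa * setdist (g x) Theta.

Definition regular_normal n (Omega : set 'rV[R]_n) (x : 'rV[R]_n) : set 'rV[R]_n :=
  [set v | forall eps : R, 0 < eps -> exists delta : R, 0 < delta /\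
     forall x', Omega x' -> enorm (x' - x) < delta ->
       dotv v (x' - x) <= eps * enorm (x' - x)].

Definition limiting_normal n (Omega : set 'rV[R]_n) (xbar : 'rV[R]_n) : set 'rV[R]_n :=
  [set v | Omega xbar /\
     exists (xk vk : nat -> 'rV[R]_n),
       (forall k, Omega (xk k)) /\ xk @ \oo --> xbar /\
       vk @ \oo --> v /\ (forall k, regular_normal Omega (xk k) (vk k))].

Definition convex_normal m (Theta : set 'rV[R]_m) (z : 'rV[R]_m) : set 'rV[R]_m :=
  [set y | Theta z /\ forall z', Theta z' -> dotv y (z' - z) <= 0].

Definition tangent_cone n (Omega : set 'rV[R]_n) (xbar : 'rV[R]_n) : set 'rV[R]_n :=
  [set w | exists (t : nat -> R) (wk : nat -> 'rV[R]_n),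
     (forall k, 0 < t k) /\ t @ \oo --> 0 /\ wk @ \oo --> w /\
     (forall k, Omega (xbar + t k *: wk k))].

Definition critical_cone n (Omega : set 'rV[R]_n) (xbar vbar : 'rV[R]_n) : set 'rV[R]_n :=
  [set w | tangent_cone Omega xbar w /\ dotv w vbar = 0].

Definition jac_adj n m (g : 'rV[R]_n -> 'rV[R]_m) (xbar : 'rV[R]_n) (y : 'rV[R]_m)
  : 'rV[R]_n := \row_(j < n) dotv y (derive g xbar (ebasis j)).

Definition hess_quad n m (g : 'rV[R]_n -> 'rV[R]_m) (xbar : 'rV[R]_n)
  (y : 'rV[R]_m) (v : 'rV[R]_n) : R :=
  let phi := fun x : 'rV[R]_n => dotv y (g x) : R^o in
  \sum_(j < n) \sum_(k < n)
     v 0 j * v 0 k * derive (fun z => derive phi z (ebasis j)) xbar (ebasis k).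

Definition multipliers n m (g : 'rV[R]_n -> 'rV[R]_m) (Theta : set 'rV[R]_m)
  (xbar vbar : 'rV[R]_n) : set 'rV[R]_m :=
  [set y | vbar = jac_adj g xbar y /\ convex_normal Theta (g xbar) y].

Definition argmax_set n m (g : 'rV[R]_n -> 'rV[R]_m) (Theta : set 'rV[R]_m)
  (xbar vbar v : 'rV[R]_n) : set 'rV[R]_m :=
  [set y | multipliers g Theta xbar vbar y /\
     forall y', multipliers g Theta xbar vbar y' ->
       hess_quad g xbar y' v <= hess_quad g xbar y v].

End Defs.

(* Write Theta = {z | A z <= b}. By Farkas' lemma the normal cone of Theta at
   g(xbar) is the cone spanned by the active rows a_i, so P(xbar, vbar) is the
   image of F = {mu >= 0 | sum_i mu_i g'(xbar)^* a_i = vbar} under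
   mu |-> sum_i mu_i a_i, on which the objective <v, Hess <y, g>(xbar) v> is
   linear. A linear program attains its maximum as soon as it is feasible and
   has no improving recession direction.
   Feasibility: under MSCQ every limiting normal to Gamma lies in
   g'(xbar)^* N_Theta(g xbar). Otherwise Farkas gives h with <vbar, h> > 0 and
   g'(xbar) h a feasible direction of Theta at g(xbar); then x + t h is
   o(t)-close to Gamma uniformly for x in Gamma near xbar, so the regular
   normals v_N at x_N satisfy <v_N, h> <= o(1), and <vbar, h> <= 0 in the limit.
   Boundedness: a recession direction gives lambda in N_Theta(g xbar) with
   g'(xbar)^* lambda = 0; along a tangent sequence xbar + t_N w_N of Gamma the
   function <lambda, g> does not increase, and a second-order mean value
   expansion yields <v, Hess <lambda, g>(xbar) v> <= 0. *)

From HB Require Import structures.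
From mathcomp Require Import all_boot all_order all_algebra.
From mathcomp Require Import all_classical all_reals all_analysis.
From mathcomp Require Import ring lra.
Import Order.TTheory GRing.Theory Num.Theory.
Import numFieldNormedType.Exports.
Local Open Scope classical_set_scope.
Local Open Scope ring_scope.
Set Implicit Arguments. Unset Strict Implicit. Unset Printing Implicit Defensive.

Section InnerProduct.
Variable R : realType.
Implicit Types (n p : nat).

Lemma dotvC n (u v : 'rV[R]_n) : dotv u v = dotv v u.
Proof. by apply: eq_bigr => i _; rewrite mulrC. Qed.

Lemma dotvDl n (u w v : 'rV[R]_n) : dotv (u + w) v = dotv u v + dotv w v.
Proof. by rewrite /dotv -big_split; apply: eq_bigr => i _; rewrite mxE mulrDl. Qed.

Lemma dotvZl n a (u v : 'rV[R]_n) : dotv (a *: u) v = a * dotv u v.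
Proof. by rewrite /dotv mulr_sumr; apply: eq_bigr => i _; rewrite mxE mulrA. Qed.

Lemma dotv0l n (v : 'rV[R]_n) : dotv 0 v = 0.
Proof. by rewrite /dotv big1 // => i _; rewrite mxE mul0r. Qed.

Lemma dotvNl n (u v : 'rV[R]_n) : dotv (- u) v = - dotv u v.
Proof. by rewrite -scaleN1r dotvZl mulN1r. Qed.

Lemma dotvBl n (u w v : 'rV[R]_n) : dotv (u - w) v = dotv u v - dotv w v.
Proof. by rewrite dotvDl dotvNl. Qed.

Lemma dotvZr n a (v u : 'rV[R]_n) : dotv v (a *: u) = a * dotv v u.
Proof. by rewrite dotvC dotvZl dotvC. Qed.

Lemma dotvBr n (v u w : 'rV[R]_n) : dotv v (u - w) = dotv v u - dotv v w.
Proof. by rewrite !(dotvC v) dotvBl. Qed.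

Lemma dotv_suml n p (F : 'I_p -> 'rV[R]_n) v :
  dotv (\sum_(i < p) F i) v = \sum_(i < p) dotv (F i) v.
Proof. exact: (big_morph (fun u => dotv u v) (fun u w => dotvDl u w v) (dotv0l v)). Qed.

Lemma dotv_sumr n p (F : 'I_p -> 'rV[R]_n) v :
  dotv v (\sum_(i < p) F i) = \sum_(i < p) dotv v (F i).
Proof. by rewrite dotvC dotv_suml; apply: eq_bigr => i _; rewrite dotvC. Qed.

Lemma dotv_ge0 n (u : 'rV[R]_n) : 0 <= dotv u u.
Proof. by apply: sumr_ge0 => i _; rewrite -expr2 sqr_ge0. Qed.

Lemma dotv_gt0 n (u : 'rV[R]_n) : u != 0 -> 0 < dotv u u.
Proof.
move=> u0; rewrite lt_def dotv_ge0 andbT; apply: contraNN u0 => /eqP uu0.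
apply/eqP/rowP => j; rewrite mxE.
have /eqP : u 0 j * u 0 j = 0.
  by apply: (psumr_eq0P _ uu0) => // i _; rewrite -expr2 sqr_ge0.
by rewrite mulf_eq0 orbb => /eqP.
Qed.

Lemma dotv_ebasis n (i : 'I_n) (u : 'rV[R]_n) : dotv (ebasis R i) u = u 0 i.
Proof.
rewrite /dotv (bigD1 i) //= big1 ?addr0 => [|j ji]; first by rewrite mxE !eqxx mul1r.
by rewrite mxE eqxx (negbTE ji) mul0r.
Qed.

Lemma dotv_continuous n (y : 'rV[R]_n) : continuous (dotv y).
Proof.
rewrite /dotv; apply: (continuous_big (@add_continuous R^o)) => i _ u.
by apply: continuousM; [exact: cst_continuous | exact: coord_continuous].
Qed.

End InnerProduct.

Section Norms.
Variable R : realType.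
Implicit Types (n : nat).

Definition norm1 n (u : 'rV[R]_n) : R := \sum_(i < n) `|u 0 i|.

Lemma norm1_ge0 n (u : 'rV[R]_n) : 0 <= norm1 u.
Proof. exact: sumr_ge0. Qed.

Lemma norm1D n (u w : 'rV[R]_n) : norm1 (u + w) <= norm1 u + norm1 w.
Proof. by rewrite /norm1 -big_split; apply: ler_sum => i _; rewrite mxE ler_normD. Qed.

Lemma norm1Z n a (u : 'rV[R]_n) : norm1 (a *: u) = `|a| * norm1 u.
Proof. by rewrite /norm1 mulr_sumr; apply: eq_bigr => i _; rewrite mxE normrM. Qed.

Lemma norm1N n (u : 'rV[R]_n) : norm1 (- u) = norm1 u.
Proof. by apply: eq_bigr => i _; rewrite mxE normrN. Qed.

Lemma norm1_continuous n : continuous (@norm1 n).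
Proof.
rewrite /norm1; apply: (continuous_big (@add_continuous R^o)) => i _ u.
by apply: continuous_comp; [exact: coord_continuous | exact: norm_continuous].
Qed.

Lemma enorm_ge0 n (u : 'rV[R]_n) : 0 <= enorm u.
Proof. exact: sqrtr_ge0. Qed.

Lemma coord_le_enorm n (u : 'rV[R]_n) i : `|u 0 i| <= enorm u.
Proof.
rewrite /enorm -sqrtr_sqr ler_sqrt ?dotv_ge0 // /dotv (bigD1 i) //= -expr2 lerDl.
by apply: sumr_ge0 => j _; rewrite -expr2 sqr_ge0.
Qed.

Lemma coord_le_mxnorm n (u : 'rV[R]_n) i : `|u 0 i| <= `|u|.
Proof.
rewrite [`|u|]mx_normrE; apply/bigmax_geP; right => /=.
by exists (0, i) => //; rewrite mem_index_enum.
Qed.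

Lemma enorm_le_norm1 n (u : 'rV[R]_n) : enorm u <= norm1 u.
Proof.
rewrite /enorm -(ger0_norm (norm1_ge0 u)) -sqrtr_sqr ler_sqrt ?sqr_ge0 //.
rewrite expr2 /norm1 /dotv mulr_suml; apply: ler_sum => i _.
apply: (le_trans (ler_norm _)); rewrite normrM; apply: ler_wpM2l => //.
by rewrite (bigD1 i) //= lerDl; exact: sumr_ge0.
Qed.

Lemma norm1_le_enorm n (u : 'rV[R]_n) : norm1 u <= n%:R * enorm u.
Proof.
rewrite /norm1 (le_trans (ler_sum _ (fun i _ => coord_le_enorm u i))) //.
by rewrite sumr_const card_ord mulr_natl.
Qed.

Lemma dotv_le_norm1 n (u w : 'rV[R]_n) c :
  (forall i, `|w 0 i| <= c) -> `|dotv u w| <= norm1 u * c.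
Proof.
move=> wc; rewrite /dotv /norm1 mulr_suml; apply: le_trans (ler_norm_sum _ _ _) _.
by apply: ler_sum => i _; rewrite normrM; apply: ler_wpM2l.
Qed.

Lemma dotv_le_norm1_enorm n (u w : 'rV[R]_n) : `|dotv u w| <= norm1 u * enorm w.
Proof. exact/dotv_le_norm1/coord_le_enorm. Qed.

Lemma dotv_le_norm1_mxnorm n (u w : 'rV[R]_n) : `|dotv u w| <= norm1 u * `|w|.
Proof. exact/dotv_le_norm1/coord_le_mxnorm. Qed.

Lemma setdist_le n (z w : 'rV[R]_n) (A : set 'rV[R]_n) :
  A w -> setdist z A <= enorm (z - w).
Proof.
move=> Aw; apply: ge_inf; last by exists w.
by exists 0 => _ [a _ <-]; exact: enorm_ge0.
Qed.

Lemma setdist_lt n (z : 'rV[R]_n) (A : set 'rV[R]_n) r :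
  A !=set0 -> setdist z A < r -> exists2 a, A a & enorm (z - a) < r.
Proof.
move=> [a0 Aa0] zAr; have [|//|_ [a Aa <-] za] := @inf_lt _ [set enorm (z - a) | a in A] r.
  by exists (enorm (z - a0)), a0.
by exists a.
Qed.

End Norms.

Section Farkas.
Variable R : realType.
Implicit Types (n p : nat).

Definition in_cone n p (a : 'I_p -> 'rV[R]_n) (v : 'rV[R]_n) : Prop :=
  exists mu : 'I_p -> R, (forall i, 0 <= mu i) /\ v = \sum_(i < p) mu i *: a i.

Definition cons_coef p (t : R) (mu : 'I_p -> R) (i : 'I_p.+1) : R :=
  if unlift ord0 i is Some j then mu j else t.

Lemma cons_coef_sum n p t mu (a : 'I_p.+1 -> 'rV[R]_n) :
  \sum_(i < p.+1) cons_coef t mu i *: a i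
  = t *: a ord0 + \sum_(j < p) mu j *: a (lift ord0 j).
Proof.
rewrite big_ord_recl /cons_coef unlift_none; congr (_ + _).
by apply: eq_bigr => j _; rewrite liftK.
Qed.

Lemma cons_coef_ge0 p t (mu : 'I_p -> R) :
  0 <= t -> (forall j, 0 <= mu j) -> forall i, 0 <= cons_coef t mu i.
Proof. by move=> t0 mu0 i; rewrite /cons_coef; case: (unlift ord0 i). Qed.

(* Induction on the number of generators: when the first generator [w] is not
   separated by [h], the other generators and [v] are projected along [w] onto
   the hyperplane orthogonal to [h]. *)
Lemma farkas_alternative n p (a : 'I_p -> 'rV[R]_n) (v : 'rV[R]_n) :
  in_cone a v \/ exists h, (forall i, dotv (a i) h <= 0) /\ 0 < dotv v h.
Proof.
elim: p a v => [|p IH] a v.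
  have [->|v0] := eqVneq v 0.
    by left; exists (fun=> 0); split => //; rewrite big_ord0.
  by right; exists v; split; [case | exact: dotv_gt0].
set w := a ord0; set a' := fun j => a (lift ord0 j).
have [[mu [mu0 ->]]|[h [a'h vh]]] := IH a' v.
  left; exists (cons_coef 0 mu); split; first exact: cons_coef_ge0.
  by rewrite cons_coef_sum scale0r add0r.
have [wh|wh] := leP (dotv w h) 0.
  right; exists h; split => // i.
  by case: (unliftP ord0 i) => [j ->|->] //; exact: a'h.
set al := dotv w h.
have al0 : al != 0 by rewrite gt_eqF.
set phi := fun j => dotv (a' j) h / al.
have phi0 j : phi j <= 0 by rewrite /phi ler_pdivrMr // mul0r; exact: a'h.
have [[mu [mu0 hmu]]|[h2 [ha2 hv2]]] :=
  IH (fun j => a' j - phi j *: w) (v - (dotv v h / al) *: w).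
  left; exists (cons_coef (dotv v h / al - \sum_j mu j * phi j) mu); split.
    apply: cons_coef_ge0 => //; rewrite subr_ge0; apply: (@le_trans _ _ 0).
      by apply: sumr_le0 => j _; rewrite mulr_ge0_le0.
    by rewrite divr_ge0 // ltW.
  have {1}-> : v = \sum_j mu j *: (a' j - phi j *: w) + (dotv v h / al) *: w.
    by move/eqP: hmu; rewrite subr_eq => /eqP.
  have -> : \sum_j mu j *: (a' j - phi j *: w)
      = \sum_j mu j *: a' j - (\sum_j mu j * phi j) *: w.
    by rewrite scaler_suml -sumrB; apply: eq_bigr => j _; rewrite scalerBr scalerA.
  by rewrite cons_coef_sum scalerBl addrC addrA [RHS]addrAC.
right; exists (h2 - (dotv w h2 / al) *: h); split.
  move=> i; case: (unliftP ord0 i) => [j ->|->].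
    have := ha2 j; rewrite dotvBl dotvZl dotvBr dotvZr.
    suff -> : dotv w h2 / al * dotv (a' j) h = phi j * dotv w h2 by [].
    by rewrite /phi; ring.
  by rewrite -/w dotvBr dotvZr -/al divfK // subrr.
move: hv2; rewrite dotvBl dotvZl dotvBr dotvZr.
suff -> : dotv w h2 / al * dotv v h = dotv v h / al * dotv w h2 by [].
by ring.
Qed.

End Farkas.

Section LinearProgram.
Variable R : realType.
Variables (n p : nat) (B : 'I_p -> 'rV[R]_n) (t : 'rV[R]_n) (w : 'I_p -> R).

Definition lp_feasible (mu : 'I_p -> R) : Prop :=
  (forall i, 0 <= mu i) /\ t = \sum_(i < p) mu i *: B i.

Definition lp_value (mu : 'I_p -> R) : R := \sum_(i < p) mu i * w i.

Definition lp_basic (mu : 'I_p -> R) : Prop :=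
  forall d : 'I_p -> R, (forall i, mu i = 0 -> d i = 0) ->
    \sum_(i < p) d i *: B i = 0 -> forall i, d i = 0.

Definition lp_support (mu : 'I_p -> R) : {set 'I_p} := [set i | mu i != 0].

Hypothesis lp_no_improving_ray : forall d : 'I_p -> R, (forall i, 0 <= d i) ->
  \sum_(i < p) d i *: B i = 0 -> lp_value d <= 0.

Lemma lp_value_opp d : lp_value (fun i => - d i) = - lp_value d.
Proof. by rewrite /lp_value -sumrN; apply: eq_bigr => i _; rewrite mulNr. Qed.

Lemma lp_nonbasic_direction mu : ~ lp_basic mu ->
  exists e : 'I_p -> R, [/\ forall i, mu i = 0 -> e i = 0,
    \sum_(i < p) e i *: B i = 0, 0 <= lp_value e & exists i, e i < 0].
Proof.
move=> nb.
have [d [ds dB [i0 di0]]] : exists d : 'I_p -> R, [/\ forall i, mu i = 0 -> d i = 0,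
    \sum_(i < p) d i *: B i = 0 & exists i, d i != 0].
  apply: contrapT => nd; apply: nb => d ds dB i; apply/eqP; apply: contrapT => /negP di.
  by apply: nd; exists d; split => //; exists i.
have dsN i : mu i = 0 -> - d i = 0 by move/ds ->; rewrite oppr0.
have dBN : \sum_(i < p) (- d i) *: B i = 0.
  by under eq_bigr do rewrite scaleNr; rewrite sumrN dB oppr0.
have [vd|vd] := leP 0 (lp_value d).
  have [[i di]|dge0] := pselect (exists i, d i < 0); first by exists d; split => //; exists i.
  have {}dge0 i : 0 <= d i by rewrite leNgt; apply/negP => di; apply: dge0; exists i.
  have := lp_no_improving_ray dge0 dB => vd'.
  exists (fun i => - d i); split => //; first by rewrite lp_value_opp; lra.
  by exists i0; rewrite oppr_lt0 lt_def dge0 andbT.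
have [[i di]|dle0] := pselect (exists i, 0 < d i).
  exists (fun i => - d i); split => //; first by rewrite lp_value_opp; lra.
  by exists i; rewrite oppr_lt0.
have dNge0 i : 0 <= - d i.
  by rewrite oppr_ge0 leNgt; apply/negP => di; apply: dle0; exists i.
by have := lp_no_improving_ray dNge0 dBN; rewrite lp_value_opp; lra.
Qed.

(* A non-basic feasible point is moved along an edge direction [e] until a
   coordinate vanishes: the support shrinks and the value does not decrease. *)
Lemma lp_basic_improvement N mu : (#|lp_support mu| <= N)%N -> lp_feasible mu ->
  exists2 mu', lp_feasible mu' /\ lp_basic mu' & lp_value mu <= lp_value mu'.
Proof.
elim: N mu => [|N IH] mu smu fmu.
  exists mu => //; split => // d ds dB i; apply: ds.
  have : i \notin lp_support mu by move: smu; rewrite leqn0 => /eqP/card0_eq ->.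
  by rewrite inE negbK => /eqP.
have [bmu|nb] := pselect (lp_basic mu); first by exists mu.
have [e [es eB ve [i1 ei1]]] := lp_nonbasic_direction nb.
have [i0 ei0 hmin] := @arg_minP _ _ _ i1 (fun i => e i < 0) (fun i => mu i / - e i) ei1.
set s := mu i0 / - e i0 in hmin.
have mu0 : mu i0 != 0 by apply/eqP => /es ei0'; move: ei0; rewrite ei0' ltxx.
have s0 : 0 <= s by rewrite /s divr_ge0 ?fmu.1 // oppr_ge0 ltW.
pose mu' i := mu i + s * e i.
have fmu' : lp_feasible mu'.
  split.
    move=> i; rewrite /mu'; have [ei|ei] := ltP (e i) 0;
      last exact: addr_ge0 (fmu.1 i) (mulr_ge0 _ _).
    have : s * - e i <= mu i by rewrite -ler_pdivlMr ?oppr_gt0 //; exact: hmin.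
    lra.
  have -> : \sum_(i < p) mu' i *: B i
      = \sum_(i < p) mu i *: B i + s *: \sum_(i < p) e i *: B i.
    by rewrite scaler_sumr -big_split; apply: eq_bigr => i _; rewrite scalerDl scalerA.
  by rewrite eB scaler0 addr0 fmu.2.
have smu' : lp_support mu' \proper lp_support mu.
  apply/properP; split.
    apply/fintype.subsetP => i; rewrite !inE /mu'; apply: contra => /eqP mui.
    by rewrite mui (es _ mui) mulr0 addr0.
  exists i0; rewrite !inE // negbK /mu' /s; apply/eqP.
  by field; rewrite lt_eqF.
have [|mu'' fmu'' vmu''] := IH mu' _ fmu'.
  by rewrite -ltnS; exact: leq_trans (proper_card smu') smu.
exists mu'' => //; apply: le_trans vmu''.
have -> : lp_value mu' = lp_value mu + s * lp_value e.
  by rewrite /lp_value mulr_sumr -big_split; apply: eq_bigr => i _; rewrite mulrDl mulrA.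
by rewrite lerDl mulr_ge0.
Qed.

Lemma lp_basic_unique mu mu' : lp_feasible mu -> lp_feasible mu' -> lp_basic mu ->
  lp_support mu = lp_support mu' -> mu = mu'.
Proof.
move=> fmu fmu' bmu smu; apply: funext => i; apply/eqP; rewrite -subr_eq0; apply/eqP.
apply: (bmu (fun i => mu i - mu' i)) => [j muj|].
  have : j \notin lp_support mu' by rewrite -smu inE negbK muj.
  by rewrite inE negbK => /eqP ->; rewrite muj subrr.
by under eq_bigr do rewrite scalerBl; rewrite sumrB -fmu.2 -fmu'.2 subrr.
Qed.

(* Basic feasible points are determined by their support, so there are
   finitely many; the best of them is optimal. *)
Theorem lp_max_attained : (exists mu, lp_feasible mu) ->
  exists mu, lp_feasible mu /\ forall mu', lp_feasible mu' -> lp_value mu' <= lp_value mu.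
Proof.
move=> [mu0 fmu0].
pose basic_on S := exists mu, [/\ lp_feasible mu, lp_basic mu & lp_support mu = S].
have [sol solP] : {sol : {set 'I_p} -> 'I_p -> R & forall S, basic_on S ->
    [/\ lp_feasible (sol S), lp_basic (sol S) & lp_support (sol S) = S]}.
  apply: (@choice _ _ (fun S mu => basic_on S ->
    [/\ lp_feasible mu, lp_basic mu & lp_support mu = S])) => S.
  have [[mu ?]|nS] := pselect (basic_on S); first by exists mu.
  by exists (fun=> 0).
have basic_onP mu : lp_feasible mu -> lp_basic mu -> sol (lp_support mu) = mu.
  move=> fmu bmu; have [] := solP (lp_support mu); first by exists mu.
  by move=> fs bs ss; apply: lp_basic_unique.
have [mu1 [fmu1 bmu1] _] := lp_basic_improvement (leqnn _) fmu0.
have [Sm /asboolP bSm Smax] := @arg_maxP _ _ _ (lp_support mu1)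
  (fun S => `[< basic_on S >]) (fun S => lp_value (sol S))
  (asboolT (ex_intro _ mu1 (And3 fmu1 bmu1 erefl))).
have [fSm _ _] := solP _ bSm.
exists (sol Sm); split => // mu fmu.
have [mu2 [fmu2 bmu2] vmu2] := lp_basic_improvement (leqnn _) fmu.
apply: (le_trans vmu2); rewrite -(basic_onP _ fmu2 bmu2); apply: Smax.
by apply/asboolP; exists mu2.
Qed.

End LinearProgram.

Lemma small_enough_forall (R : realType) (I : finType) (P : I -> R -> Prop) :
  (forall i, exists2 d, 0 < d & forall e, 0 < e -> e <= d -> P i e) ->
  exists2 e, 0 < e & forall i, P i e.
Proof.
move=> smallP.
have [d dP] : {d : I -> R & forall i, 0 < d i /\ forall e, 0 < e -> e <= d i -> P i e}.
  apply: (@choice _ _ (fun i d => 0 < d /\ forall e, 0 < e -> e <= d -> P i e)) => i.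
  by have [d d0 dP] := smallP i; exists d.
have d0 : 0 < \big[Order.min/1]_i d i.
  by elim/big_ind: _ => // [x y x0 y0|i _]; [rewrite lt_min x0 y0 | case: (dP i)].
exists (\big[Order.min/1]_i d i) => // i.
by case: (dP i) => _; apply => //; exact: bigmin_le.
Qed.

Section Polyhedron.
Variable R : realType.
Variables (m k : nat) (A : 'M[R]_(k, m)) (b : 'rV[R]_k).

Definition halfspaces : set 'rV[R]_m :=
  [set z | forall i : 'I_k, (z *m A^T) 0 i <= b 0 i].

Definition active_rows (zb : 'rV[R]_m) (i : 'I_k) : 'rV[R]_m :=
  if dotv zb (row i A) == b 0 i then row i A else 0.

Lemma mulmx_trT_dotv (z : 'rV[R]_m) i : (z *m A^T) 0 i = dotv z (row i A).
Proof. by rewrite !mxE; apply: eq_bigr => j _; rewrite !mxE. Qed.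

Lemma halfspacesP z : halfspaces z <-> forall i, dotv z (row i A) <= b 0 i.
Proof. by split => zA i; [rewrite -mulmx_trT_dotv | rewrite mulmx_trT_dotv]. Qed.

(* Inactive constraints have positive slack [s], which absorbs a move of size
   [r] once [r] times [norm1 a + |<d, a>| + 1] is at most [s]. *)
Lemma halfspaces_active_descent zb d : halfspaces zb ->
  (forall i, dotv (active_rows zb i) d <= 0) ->
  exists2 r, 0 < r & forall z t, halfspaces z -> `|zb - z| < r -> 0 <= t -> t <= r ->
    halfspaces (z + t *: d).
Proof.
move=> /halfspacesP zbA dA.
suff [r r0 rP] : exists2 r, 0 < r & forall i z t, halfspaces z -> `|zb - z| < r ->
    0 <= t -> t <= r -> dotv (z + t *: d) (row i A) <= b 0 i.
  by exists r => // z t zA zr t0 tr; apply/halfspacesP => i; exact: rP.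
apply: small_enough_forall => i; set a := row i A.
move: (dA i); rewrite /active_rows; case: eqP => [_|inact] dai.
  exists 1 => // r _ _ z t /halfspacesP zA _ t0 _.
  have : t * dotv d a <= 0 by rewrite dotvC mulr_ge0_le0.
  by have := zA i; rewrite dotvDl dotvZl; lra.
set s := b 0 i - dotv zb a.
have s0 : 0 < s by rewrite subr_gt0 lt_neqAle zbA andbT; apply/eqP.
set c := norm1 a + `|dotv d a| + 1.
have c0 : 0 < c by rewrite ltr_pwDr // addr_ge0 // norm1_ge0.
exists (s / c); first exact: divr_gt0.
move=> r r0 rs z t _ zr t0 tr.
have za : dotv z a <= dotv zb a + norm1 a * r.
  have := dotv_le_norm1_mxnorm a (zb - z).
  rewrite dotvBr !(dotvC a) ler_norml => /andP[zba _].
  have : norm1 a * `|zb - z| <= norm1 a * r by rewrite ler_wpM2l ?norm1_ge0 ?ltW.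
  lra.
have td : t * dotv d a <= r * `|dotv d a|.
  by apply: le_trans (ler_wpM2l t0 (ler_norm _)) (ler_wpM2r (normr_ge0 _) tr).
have : r * c <= s by rewrite -ler_pdivlMr.
rewrite dotvDl dotvZl /c /s; nra.
Qed.

Lemma active_cone_normal zb y : halfspaces zb ->
  in_cone (active_rows zb) y -> convex_normal halfspaces zb y.
Proof.
move=> zbA [mu [mu0 ->]]; split => // z /halfspacesP zA.
rewrite dotv_suml; apply: sumr_le0 => i _; rewrite dotvZl mulr_ge0_le0 //.
rewrite /active_rows; case: eqP => [act|_]; last by rewrite dotv0l.
by rewrite dotvBr !(dotvC (row i A)) act subr_le0.
Qed.

Lemma normal_active_cone zb y : halfspaces zb ->
  convex_normal halfspaces zb y -> in_cone (active_rows zb) y.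
Proof.
move=> zbA [_ yN]; have [//|[h [ah yh]]] := farkas_alternative (active_rows zb) y.
have [r r0 rP] := halfspaces_active_descent zbA ah.
have := yN _ (rP zb r zbA _ (ltW r0) (lexx r)); rewrite subrr normr0 => /(_ r0).
by rewrite addrC addKr dotvZr leNgt mulr_gt0.
Qed.

End Polyhedron.

Lemma continuous_dist_lt (R : realType) (V W : normedModType R) (f : V -> W) x :
  {for x, continuous f} ->
  forall e, 0 < e -> exists2 d, 0 < d & forall y, `|x - y| < d -> `|f x - f y| < e.
Proof.
move=> /cvgrPdist_lt fx e /fx /nbhs_normP[d d0 dP].
by exists d => // y; exact: dP.
Qed.

Section DirectionalDerivative.
Variable R : realType.
Variable n : nat.
Implicit Types (a v h : 'rV[R]_n).

Lemma derive_dotv m (f : 'rV[R]_n -> 'rV[R]_m) (y : 'rV[R]_m) a v : derivable f a v ->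
  derivable (fun x => dotv y (f x) : R^o) a v /\
  derive (fun x => dotv y (f x) : R^o) a v = dotv y (derive f a v).
Proof.
move=> fav.
have dq : (fun h : R => h^-1 *: (((fun x => dotv y (f x) : R^o) \o shift a) (h *: v)
    - dotv y (f a))) @ 0^' --> dotv y (derive f a v).
  have -> : (fun h : R => h^-1 *: (((fun x => dotv y (f x) : R^o) \o shift a) (h *: v)
      - dotv y (f a))) = dotv y \o (fun h : R => h^-1 *: ((f \o shift a) (h *: v) - f a)).
    by apply: funext => h /=; rewrite dotvZr dotvBr.
  by apply: continuous_cvg; [exact: dotv_continuous | exact: fav].
by split; [exact: cvgP dq | exact: cvg_lim dq].
Qed.

Lemma derive_linear (W : normedModType R) (f : 'rV[R]_n -> W) a v :
  differentiable f a -> derive f a v = \sum_(j < n) v 0 j *: derive f a (ebasis R j).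
Proof.
move=> fa; rewrite deriveE //; under eq_bigr do rewrite deriveE //.
by rewrite {1}(row_sum_delta v) linear_sum; apply: eq_bigr => j _; rewrite linearZ.
Qed.

Lemma is_derive_line (phi : 'rV[R]_n -> R) a h s : derivable phi (a + s *: h) h ->
  is_derive s 1 (fun t : R => phi (a + t *: h)) (derive phi (a + s *: h) h).
Proof.
have E : (fun t : R => t^-1 *: (((fun t : R => phi (a + t *: h)) \o shift s) (t *: 1)
    - phi (a + s *: h)))
  = (fun t : R => t^-1 *: ((phi \o shift (a + s *: h)) (t *: h) - phi (a + s *: h))).
  apply: funext => t /=; congr (_ *: (phi _ - _)).
  by rewrite [t *: 1]mulr1 scalerDl addrCA addrC.
by move=> phiD; split; rewrite /derivable /derive E.
Qed.

Lemma mean_value_line (phi : 'rV[R]_n -> R) a h t :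
  (forall x, derivable phi x h) -> 0 < t ->
  exists2 c, 0 < c < t & phi (a + t *: h) - phi a = derive phi (a + c *: h) h * t.
Proof.
move=> phiD t0.
have lineD (x : R) : is_derive x 1 (fun s => phi (a + s *: h)) (derive phi (a + x *: h) h).
  exact: is_derive_line.
have phiC : {within `[0, t], continuous (fun s => phi (a + s *: h))}.
  by apply: derivable_within_continuous => x _; have [] := lineD x.
have [c] := MVT t0 (fun x _ => lineD x) phiC.
by rewrite in_itv /= scale0r addr0 subr0 => ct ->; exists c.
Qed.

(* Uniform in the base point [x], by the mean value theorem and continuity of
   the directional derivative at [xb]. *)
Lemma directional_first_order (phi : 'rV[R]_n -> R) xb h :
  (forall x, derivable phi x h) -> {for xb, continuous (fun p => derive phi p h)} ->
  forall eps, 0 < eps -> exists2 d, 0 < d & forall x t, `|xb - x| < d -> 0 < t -> t < d ->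
    `|phi (x + t *: h) - phi x - t * derive phi xb h| <= eps * t.
Proof.
move=> phiD phi'C eps eps0; have [d0 d00 d0P] := continuous_dist_lt phi'C eps0.
have h1 : 0 < 2 * (`|h| + 1) by rewrite mulr_gt0 // ltr_pwDr.
pose q := d0 / (2 * (`|h| + 1)).
have qE : q * (2 * (`|h| + 1)) = d0 by rewrite divfK // gt_eqF.
exists q => [|x t xbx t0 td]; first exact: divr_gt0.
have [c /andP[c0 ct] ->] := mean_value_line x phiD t0.
rewrite (mulrC t) -mulrBl normrM (gtr0_norm t0) ler_wpM2r ?(ltW t0) // distrC.
apply/ltW/d0P; rewrite opprD addrA; apply: le_lt_trans (ler_normB _ _) _.
rewrite normrZ (gtr0_norm c0).
have : c * `|h| <= q * `|h| by rewrite ler_wpM2r // ltW // (lt_trans ct).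
by have := normr_ge0 h; lra.
Qed.

End DirectionalDerivative.

Section SmoothMap.
Variable R : realType.
Variables (n m : nat) (g : 'rV[R]_n -> 'rV[R]_m).

Definition partial_deriv (j : 'I_n) (x : 'rV[R]_n) : 'rV[R]_m := derive g x (ebasis R j).

Definition second_partial (j k : 'I_n) (x : 'rV[R]_n) : 'rV[R]_m :=
  derive (partial_deriv j) x (ebasis R k).

Definition hess_sum (y : 'rV[R]_m) (w : 'rV[R]_n) (p : 'I_n -> 'rV[R]_n) : R :=
  \sum_(j < n) \sum_(k < n) w 0 j * w 0 k * dotv y (second_partial j k (p j)).

Hypothesis g_diff : forall x, differentiable g x.
Hypothesis partial_diff : forall j x, differentiable (partial_deriv j) x.

Lemma derive_dotv_g y x v :
  derivable (fun z => dotv y (g z) : R^o) x v /\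
  derive (fun z => dotv y (g z) : R^o) x v = dotv y (derive g x v).
Proof. exact/derive_dotv/diff_derivable. Qed.

Lemma derive_dotv_partial y j x v :
  derivable (fun z => dotv y (partial_deriv j z) : R^o) x v /\
  derive (fun z => dotv y (partial_deriv j z) : R^o) x v
    = dotv y (derive (partial_deriv j) x v).
Proof. exact/derive_dotv/diff_derivable. Qed.

Lemma derive_g_linear x w : derive g x w = \sum_(j < n) w 0 j *: partial_deriv j x.
Proof. exact: derive_linear. Qed.

Lemma derive_partial_linear j x w :
  derive (partial_deriv j) x w = \sum_(k < n) w 0 k *: second_partial j k x.
Proof. exact: derive_linear. Qed.

Lemma hess_quadE x y v : hess_quad g x y v = hess_sum y v (fun=> x).
Proof.
apply: eq_bigr => j _; apply: eq_bigr => k _.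
have -> : (fun z => derive (fun x => dotv y (g x) : R^o) z (ebasis R j))
    = (fun z => dotv y (partial_deriv j z)).
  by apply: funext => z; rewrite (derive_dotv_g y z _).2.
by rewrite (derive_dotv_partial y j x _).2.
Qed.

Lemma hess_quad_sum p x (mu : 'I_p -> R) (c : 'I_p -> 'rV[R]_m) v :
  hess_quad g x (\sum_(i < p) mu i *: c i) v = \sum_(i < p) mu i * hess_quad g x (c i) v.
Proof.
rewrite hess_quadE /hess_sum.
under eq_bigr do under eq_bigr do rewrite dotv_suml mulr_sumr.
under eq_bigr do rewrite exchange_big /=; rewrite exchange_big /=.
apply: eq_bigr => i _; rewrite hess_quadE /hess_sum mulr_sumr; apply: eq_bigr => j _.
rewrite mulr_sumr; apply: eq_bigr => k _; rewrite dotvZl; ring.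
Qed.

Lemma jac_adj_dotv x y h : dotv (jac_adj g x y) h = dotv y (derive g x h).
Proof.
rewrite derive_g_linear dotv_sumr; apply: eq_bigr => j _.
by rewrite !mxE dotvZr mulrC.
Qed.

Lemma jac_adj_sum p x (mu : 'I_p -> R) (c : 'I_p -> 'rV[R]_m) :
  jac_adj g x (\sum_(i < p) mu i *: c i) = \sum_(i < p) mu i *: jac_adj g x (c i).
Proof.
apply/rowP => j; rewrite !mxE summxE dotv_suml; apply: eq_bigr => i _.
by rewrite dotvZl !mxE.
Qed.

Lemma derive_g_continuous h : continuous (fun x => derive g x h).
Proof.
move=> x; under [fun x => _]funext do rewrite derive_g_linear.
apply: (continuous_big (@add_continuous _)) => j _ z.
by apply: continuousZl_tmp; exact/differentiable_continuous/partial_diff.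
Qed.

(* Coordinatewise, [g x 0 i = dotv (ebasis i) (g x)], so the scalar estimate
   applies to each of the [m] coordinates with accuracy [eps / (m + 1)]. *)
Lemma first_order_uniform xb h eps : 0 < eps ->
  exists2 d, 0 < d & forall x t, `|xb - x| < d -> 0 < t -> t < d ->
    enorm (g (x + t *: h) - g x - t *: derive g xb h) <= eps * t.
Proof.
move=> eps0; have m1 : 0 < m%:R + 1 :> R by rewrite ltr_pwDr.
have eps'0 : 0 < eps / (m%:R + 1) by rewrite divr_gt0.
have [d d0 dP] : exists2 d, 0 < d & forall i x t, `|xb - x| < d -> 0 < t -> t < d ->
    `|g (x + t *: h) 0 i - g x 0 i - t * derive g xb h 0 i| <= eps / (m%:R + 1) * t.
  apply: small_enough_forall => i.
  have coordD z : derivable (fun x => dotv (ebasis R i) (g x) : R^o) z h.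
    exact: (derive_dotv_g _ _ _).1.
  have coordC : (fun z => derive (fun x => dotv (ebasis R i) (g x) : R^o) z h) @ xb
      --> derive (fun x => dotv (ebasis R i) (g x) : R^o) xb h.
    have -> : (fun z => derive (fun x => dotv (ebasis R i) (g x) : R^o) z h)
        = (fun z => derive g z h 0 i).
      by apply: funext => z; rewrite (derive_dotv_g _ _ _).2 dotv_ebasis.
    rewrite (derive_dotv_g _ _ _).2 dotv_ebasis.
    apply: (@continuous_cvg _ _ _ _ _ (fun z => derive g z h) (fun u : 'rV[R]_m => u 0 i)).
    - exact: nbhs_filter.
    - exact: coord_continuous.
    - exact: derive_g_continuous.
  have [d d0 dP] := directional_first_order coordD coordC eps'0.
  exists d => // e e0 ed x t xbx t0 te.
  have := dP x t (lt_le_trans xbx ed) t0 (lt_le_trans te ed).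
  by rewrite (derive_dotv_g _ _ _).2 !dotv_ebasis.
exists d => // x t xbx t0 td; apply: le_trans (enorm_le_norm1 _) _.
have coordP i : `|(g (x + t *: h) - g x - t *: derive g xb h) 0 i| <= eps / (m%:R + 1) * t.
  by rewrite !mxE; exact: dP.
apply: le_trans (ler_sum _ (fun i _ => coordP i)) _.
have qE : eps / (m%:R + 1) * (m%:R + 1) = eps by rewrite divfK // gt_eqF.
rewrite /norm1 sumr_const card_ord -(mulr_natr (eps / (m%:R + 1) * t)).
by rewrite -[X in _ <= X * t]qE; have := mulr_gt0 eps'0 t0; nra.
Qed.

End SmoothMap.

Section SecondOrder.
Variable R : realType.
Variables (n m : nat) (g : 'rV[R]_n -> 'rV[R]_m).
Hypothesis g_diff : forall x, differentiable g x.
Hypothesis partial_diff : forall j x, differentiable (partial_deriv g j) x.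

(* Two mean value steps: one for [<y, g>] on [[x, x + t w]], then one for each
   [<y, partial_deriv g j>], whose value at [x] vanishes. *)
Lemma second_order_mean_value y x w t : jac_adj g x y = 0 -> 0 < t ->
  exists xi (eta : 'I_n -> R), [/\ 0 < xi < t, forall j, 0 < eta j < xi &
    dotv y (g (x + t *: w)) - dotv y (g x)
      = t * xi * hess_sum g y w (fun j => x + eta j *: w)].
Proof.
move=> yJ t0.
have [xi /andP[xi0 xit] ->] :=
  mean_value_line x (fun z => (derive_dotv_g g_diff y z w).1) t0.
have etaP j : exists e, 0 < e < xi /\ dotv y (partial_deriv g j (x + xi *: w))
    = derive (fun z => dotv y (partial_deriv g j z) : R^o) (x + e *: w) w * xi.
  have [e e0 eE] :=
    mean_value_line x (fun z => (derive_dotv_partial partial_diff y j z w).1) xi0.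
  exists e; split => //; rewrite -eE.
  by have := congr1 (fun u : 'rV[R]_n => u 0 j) yJ; rewrite !mxE => ->; rewrite subr0.
have [eta etaE] := choice etaP.
exists xi, eta; split => [|j|]; [by rewrite xi0 | by case: (etaE j) |].
rewrite (derive_dotv_g g_diff _ _ _).2 (derive_g_linear g_diff) dotv_sumr.
rewrite mulrC -mulrA; congr (t * _); rewrite /hess_sum mulr_sumr.
apply: eq_bigr => j _; case: (etaE j) => _; rewrite dotvZr => ->.
rewrite (derive_dotv_partial partial_diff _ _ _ _).2 (derive_partial_linear partial_diff).
rewrite dotv_sumr !mulr_suml !mulr_sumr; apply: eq_bigr => k _; rewrite dotvZr; ring.
Qed.

Hypothesis second_partial_cont : forall j k, continuous (second_partial g j k).

Lemma hess_sum_cvg (T : Type) (F : set_system T) {FF : Filter F} y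
    (wF : T -> 'rV[R]_n) (pF : T -> 'I_n -> 'rV[R]_n) w p :
  wF @ F --> w -> (forall j, (fun N => pF N j) @ F --> p j) ->
  hess_sum g y (wF N) (pF N) @[N --> F] --> hess_sum g y w p.
Proof.
move=> wFw pFp; apply: (cvg_big (@add_continuous _)) => j _.
apply: (cvg_big (@add_continuous _)) => k _.
have coordF i : (fun N => wF N 0 i) @ F --> w 0 i.
  by apply: (continuous_cvg _ (@coord_continuous _ _ _ 0 i w)).
apply: cvgM; first exact: cvgM.
apply: (@continuous_cvg _ _ _ _ _ (fun N => second_partial g j k (pF N j)) (dotv y)).
  exact: dotv_continuous.
apply: (@continuous_cvg _ _ _ _ _ (fun N => pF N j) (second_partial g j k)) => //.
exact: second_partial_cont.
Qed.

Lemma hess_quad_tangent_le0 (Theta : set 'rV[R]_m) x y v :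
  (forall z, Theta z -> dotv y (z - g x) <= 0) -> jac_adj g x y = 0 ->
  tangent_cone [set z | Theta (g z)] x v -> hess_quad g x y v <= 0.
Proof.
move=> yN yJ [t [w [t0 [t_0 [wv xtw]]]]].
have stepP N : exists eta : 'I_n -> R,
    (forall j, 0 < eta j < t N) /\ hess_sum g y (w N) (fun j => x + eta j *: w N) <= 0.
  have [xi [eta [/andP[xi0 xit] etaP E]]] := second_order_mean_value (w N) yJ (t0 N).
  exists eta; split => [j|]; first by case/andP: (etaP j) => -> /lt_trans ->.
  have := yN _ (xtw N); rewrite dotvBr E pmulr_rle0 //.
  exact: mulr_gt0.
have [eta etaP] := choice stepP.
have eta_0 j : (fun N => eta N j) @ \oo --> 0.
  apply: (@squeeze_cvgr _ _ _ _ (fun=> 0) t) => //; last exact: cvg_cst.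
  by apply: filterE => N; case/andP: ((etaP N).1 j) => /ltW -> /ltW.
have pN_x j : (fun N => x + eta N j *: w N) @ \oo --> x.
  rewrite -[X in _ --> X]addr0 -(scale0r v).
  by apply: cvgD; [exact: cvg_cst | exact: cvgZ (eta_0 j) wv].
have hess_cvg : hess_sum g y (w N) (fun j => x + eta N j *: w N) @[N --> \oo]
    --> hess_sum g y v (fun=> x) by exact: hess_sum_cvg.
rewrite hess_quadE //; apply: (ler_cvg_to hess_cvg (cvg_cst 0)).
by apply: filterE => N; exact: (etaP N).2.
Qed.

End SecondOrder.

(* Writing [x' - x = t h - r] with [enorm r <= eps t], the error [r] costs at
   most [eps * norm1 v] per unit of [t]; the regular normal inequality makes
   everything else [o(t)]. *)
Lemma regular_normal_approx_dir (R : realType) n (Omega : set 'rV[R]_n) x v h eps :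
  regular_normal Omega x v -> 0 <= eps ->
  (forall tau, 0 < tau -> exists t, 0 < t < tau /\
     exists2 x', Omega x' & enorm (x + t *: h - x') <= eps * t) ->
  dotv v h <= eps * norm1 v.
Proof.
move=> vN eps0 approx; apply/ler_addgt0Pr => e e0.
set C := norm1 h + n%:R * eps + 1.
have C0 : 0 < C by rewrite ltr_pwDr // addr_ge0 ?norm1_ge0 // mulr_ge0.
have [d [d0 dP]] := vN (e / C) (divr_gt0 e0 C0).
have [t [/andP[t0 td] [x' x'O rt]]] := approx (d / C) (divr_gt0 d0 C0).
set r := x + t *: h - x' in rt.
have x'x : x' - x = t *: h - r by apply/rowP => i; rewrite !mxE; ring.
have x'x_le : enorm (x' - x) <= t * C - t.
  apply: le_trans (enorm_le_norm1 _) _; rewrite x'x.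
  apply: le_trans (norm1D _ _) _; rewrite norm1N norm1Z (gtr0_norm t0).
  have : norm1 r <= n%:R * (eps * t).
    by apply: le_trans (norm1_le_enorm r) _; rewrite ler_wpM2l.
  by rewrite /C; lra.
have x'x_lt : enorm (x' - x) < d.
  have : t * C < d by rewrite -(divfK (lt0r_neq0 C0) d) ltr_pM2r.
  by have := x'x_le; lra.
have := dP x' x'O x'x_lt; rewrite x'x dotvBr dotvZr => vx'x.
have vr : dotv v r <= norm1 v * (eps * t).
  apply: le_trans (ler_norm _) _; apply: le_trans (dotv_le_norm1_enorm v r) _.
  by rewrite ler_wpM2l ?norm1_ge0.
have err : e / C * enorm (t *: h - r) <= e * t.
  rewrite -x'x; apply: le_trans (ler_wpM2l (ltW (divr_gt0 e0 C0)) x'x_le) _.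
  rewrite mulrBr mulrCA divfK ?lt0r_neq0 // mulrC.
  by have := mulr_gt0 (divr_gt0 e0 C0) t0; lra.
rewrite -(ler_pM2l t0); nra.
Qed.

Section Subregularity.
Variable R : realType.
Variables (n m : nat) (g : 'rV[R]_n -> 'rV[R]_m).
Hypothesis g_diff : forall x, differentiable g x.
Hypothesis partial_diff : forall j x, differentiable (partial_deriv g j) x.

Lemma mscq_lift_direction (Theta : set 'rV[R]_m) xb h :
  MSCQ g Theta xb ->
  (exists2 r, 0 < r & forall z t, Theta z -> `|g xb - z| < r -> 0 <= t -> t <= r ->
     Theta (z + t *: derive g xb h)) ->
  forall eps, 0 < eps -> exists2 d, 0 < d & forall x t, Theta (g x) ->
    `|xb - x| < d -> 0 < t -> t < d ->
    exists2 x', Theta (g x') & enorm (x + t *: h - x') <= eps * t.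
Proof.
move=> [kap [kap0 [U [/nbhs_normP[dU dU0 dUP] kapP]]]] [r r0 rP] eps eps0.
have kap1 : 0 < kap + 1 by lra.
set e := eps / (kap + 1).
have e0 : 0 < e by rewrite divr_gt0.
have eE : e * (kap + 1) = eps by rewrite divfK ?lt0r_neq0.
have [d1 d10 d1P] := first_order_uniform g_diff partial_diff xb h e0.
have [d2 d20 d2P] := continuous_dist_lt (differentiable_continuous (g_diff xb)) r0.
have h1 : 0 < `|h| + 1 by rewrite ltr_pwDr.
set d := Order.min (Order.min d1 d2) (Order.min r (dU / (`|h| + 1))).
have d0 : 0 < d by rewrite !lt_min d10 d20 r0 divr_gt0.
have [dd1 dd2 ddr ddU] : [/\ d <= d1, d <= d2, d <= r & d * (`|h| + 1) <= dU].
  by rewrite -ler_pdivlMr // !ge_min !lexx !orbT.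
exists d => // x t xT xbx t0 td.
have lin : Theta (g x + t *: derive g xb h).
  by apply: rP; [| exact: d2P (lt_le_trans xbx dd2) | exact: ltW | lra].
have distT : setdist (g (x + t *: h)) Theta <= e * t.
  apply: le_trans (setdist_le _ lin) _; rewrite opprD addrA.
  by apply: d1P; [exact: lt_le_trans xbx dd1 | | exact: lt_le_trans td dd1].
have xthU : U (x + t *: h).
  apply: dUP; rewrite /= opprD addrA; apply: le_lt_trans (ler_normB _ _) _.
  rewrite normrZ (gtr0_norm t0).
  have : t * `|h| <= d * `|h| by rewrite ler_wpM2r // ltW.
  by have := normr_ge0 h; lra.
have distG : setdist (x + t *: h) [set x' | Theta (g x')] < eps * t.
  apply: le_lt_trans (kapP _ xthU) _; rewrite -eE.
  by have := ler_wpM2l (ltW kap0) distT; have := mulr_gt0 e0 t0; nra.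
by have [x' ? /ltW] := setdist_lt (ex_intro _ x xT) distG; exists x'.
Qed.

Lemma limiting_normal_active_cone k (A : 'M[R]_(k, m)) (b : 'rV[R]_k) xbar vbar :
  halfspaces A b (g xbar) -> MSCQ g (halfspaces A b) xbar ->
  limiting_normal [set x | halfspaces A b (g x)] xbar vbar ->
  in_cone (fun i => jac_adj g xbar (active_rows A b (g xbar) i)) vbar.
Proof.
move=> gxA gMSCQ [_ [xk [vk [xkA [xk_x [vk_v vkN]]]]]].
have [//|[h [hA vh]]] := farkas_alternative
  (fun i => jac_adj g xbar (active_rows A b (g xbar) i)) vbar.
have descent i : dotv (active_rows A b (g xbar) i) (derive g xbar h) <= 0.
  by rewrite -jac_adj_dotv.
have lift := mscq_lift_direction gMSCQ (halfspaces_active_descent gxA descent).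
have vh_le eps : 0 < eps -> dotv vbar h <= eps * norm1 vbar.
  move=> eps0; have [d d0 dP] := lift eps eps0.
  have near_xbar : \forall N \near \oo, `|xbar - xk N| < d.
    by move/cvgrPdist_lt: xk_x; apply.
  rewrite dotvC; apply: (@ler_cvg_to _ _ _ _ (fun N => dotv h (vk N))
    (fun N => eps * norm1 (vk N)) _ _ _ _ (filterS _ near_xbar)).
  - by apply: continuous_cvg => //; exact: dotv_continuous.
  - by apply: cvgMl_tmp; apply: continuous_cvg => //; exact: norm1_continuous.
  move=> N xN; rewrite dotvC.
  apply: regular_normal_approx_dir (vkN N) (ltW eps0) _ => tau tau0.
  have [dt_tau dt_d] : Order.min tau d <= tau /\ Order.min tau d <= d.
    by rewrite !ge_min !lexx orbT.
  have dt0 : 0 < Order.min tau d by rewrite lt_min tau0.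
  exists (Order.min tau d / 2); split; first by apply/andP; split; lra.
  by apply: dP; [exact: xkA | exact: xN | lra | lra].
have n1v : 0 < norm1 vbar + 1 by rewrite ltr_pwDr ?norm1_ge0.
have q0 := divr_gt0 vh n1v.
have qE : dotv vbar h / (norm1 vbar + 1) * (norm1 vbar + 1) = dotv vbar h.
  by rewrite divfK ?lt0r_neq0.
by have := vh_le _ q0; lra.
Qed.

End Subregularity.

Lemma multipliers_active_coneP (R : realType) n m k (A : 'M[R]_(k, m)) b
    (g : 'rV[R]_n -> 'rV[R]_m) xbar vbar y :
  halfspaces A b (g xbar) ->
  multipliers g (halfspaces A b) xbar vbar y <->
  exists2 mu, lp_feasible (fun i => jac_adj g xbar (active_rows A b (g xbar) i)) vbar mu
    & y = \sum_(i < k) mu i *: active_rows A b (g xbar) i.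
Proof.
move=> gxA; split => [[-> /(normal_active_cone gxA) [mu [mu0 ->]]]|[mu [mu0 ->] ->]].
  by exists mu; first by split; last by rewrite jac_adj_sum.
split; first by rewrite jac_adj_sum.
by apply: active_cone_normal => //; exists mu.
Qed.

Unset Implicit Arguments.

Theorem lemma8p2 (R : realType) (n m : nat)
  (Theta : set 'rV[R]_m) (g : 'rV[R]_n -> 'rV[R]_m) (xbar vbar : 'rV[R]_n) :
  Theta !=set0 ->
  polyhedral Theta ->
  C2 g ->
  Theta (g xbar) ->
  MSCQ g Theta xbar ->
  limiting_normal [set x | Theta (g x)] xbar vbar ->
  forall v, critical_cone [set x | Theta (g x)] xbar vbar v ->
    argmax_set g Theta xbar vbar v !=set0.
Proof.
move=> _ [k [A [b ->]]] [g_diff [partial_diff second_cont]] gxA gMSCQ vbarN v [vT _].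
set a := active_rows A b (g xbar).
pose w i := hess_quad g xbar (a i) v.
have valueE mu : hess_quad g xbar (\sum_i mu i *: a i) v = lp_value w mu.
  exact: hess_quad_sum.
have no_ray d : (forall i, 0 <= d i) ->
    \sum_i d i *: jac_adj g xbar (a i) = 0 -> lp_value w d <= 0.
  move=> d0 dJ; rewrite -valueE.
  apply: (hess_quad_tangent_le0 g_diff partial_diff second_cont _ _ vT).
    by have [_] := active_cone_normal gxA (ex_intro _ d (conj d0 erefl)).
  by rewrite jac_adj_sum.
have [mu0 feas0] := limiting_normal_active_cone g_diff partial_diff gxA gMSCQ vbarN.
have [mu [fmu mu_max]] := lp_max_attained no_ray (ex_intro _ mu0 feas0).
exists (\sum_i mu i *: a i); split; first by apply/multipliers_active_coneP => //; exists mu.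
by move=> y /multipliers_active_coneP [//|mu' fmu' ->]; rewrite !valueE; exact: mu_max.
Qed.
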